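(* Fix $m\ge1$, a partition $\xi$ with all parts $\le m$, $\mu\in\mathbb Z_{\ge0}$, $\mu=\mu_1m+\mu_0$ ($0\le\mu_0<m$), $t=\#\{i:\xi_i=m\}$, and assume $k:=\mu_1+1-t\ge0$. Let $\alpha_0=m-\mu_0-1$ and $\alpha_1,\dots,\alpha_L$ the parts of $\xi$ smaller than $m$ (with multiplicity), so $F_{\xi,m,\mu}(x)=\frac{p_{m-\mu_0-1}(x)p_\xi(x)}{p_m(x)^{\mu_1+1}}=\prod_{i=0}^Lp_{\alpha_i}(x)/p_m(x)^k=\sum_{r\ge0}a_rx^r$. Suppose there exist integers $(a_\nu,b_\nu)$, $1\le\nu\le k$, with $0\le a_\nu,b_\nu\le m-1$ and $a_\nu+b_\nu\le m-1$, such that $\prod_{i=0}^Lp_{\alpha_i}(x)=\prod_{\nu=1}^kp_{a_\nu}(x)p_{b_\nu}(x)$. Then \[ F_{\xi,m,\mu}(x)=\prod_{\nu=1}^k\Big(\sum_{u\ge0}D_m(a_\nu,b_\nu;u)x^u\Big), \] so $a_r$ equals the number of $k$-tuples $(P_1,\dots,P_k)$ with $P_\nu\in\mathcal D_m(a_\nu,b_\nu;u_\nu)$ for some $u_\nu\ge0$ and $u_1+\cdots+u_k=r$; in particular all $a_r\ge0$. Moreover, in each of the following families take $\mu=|\xi|$ (and $s,t\ge 0$ integers; a notation $m^t$ denotes $t$ parts equal to $m$, parts arranged in nonincreasing order): (a) $\xi=(m^t,1^s)$, $s=qm+\rho$ with $q\ge0$, $0\le\rho<m$. For every $N\ge0$,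 $a_N$ equals the number of tuples $(P_0,\dots,P_q)$ with $P_0\in\mathcal D_m(0,m-\rho-1;u_0)$, $P_\nu\in\mathcal D_m(0,0;u_\nu)$ for $1\le\nu\le q$, and $u_0+\cdots+u_q=N$. (b) $\xi=(m^t,r,1^s)$ with $1\le r\le m-1$, $r+s=qm+\rho$, $q\ge0$, $0\le\rho<m$. If $q=0$, then for every $u\ge0$, $a_u=D_m(r,m-r-s-1;u)$, i.e. the number of Dyck paths of height at most $m-1$ and semilength $r+s+u$ whose first $r$ steps are up-steps and whose last $r+s$ steps are down-steps. If $q\ge1$, then for every $N\ge0$, $a_N$ equals the number of tuples $(P_0,\dots,P_q)$ with $P_0\in\mathcal D_m(0,m-\rho-1;u_0)$, $P_1\in\mathcal D_m(r,0;u_1)$, $P_\nu\in\mathcal D_m(0,0;u_\nu)$ for $2\le\nu\le q$, and $u_0+\cdots+u_q=N$. (c) $\xi=(m^t,r_1,\dots,r_d,1^s)$ with $1\le r_i\le m-1$, $r_1+\cdots+r_d+s=qm+\rho$, $q\ge0$, $0\le\rho<m$. If $q\ge d$, then for every $N\ge0$, $a_N$ equals the number of tuples $(P_0,\dots,P_q)$ with $P_0\in\mathcal D_m(0,m-\rho-1;u_0)$, $P_i\in\mathcal D_m(r_i,0;u_i)$ for $1\le i\le d$, $P_\nu\in\mathcal D_m(0,0;u_\nu)$ for $d+1\le\nu\le q$, and $u_0+\cdots+u_q=N$.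
   Context: $p_0=p_1=1$, $p_{r+1}(x)=p_r(x)-xp_{r-1}(x)$ ($r\ge1$); $p_\xi=\prod_ip_{\xi_i}$; $|\xi|$ is the sum of the parts. A Dyck path is a lattice path from $(0,0)$ with steps $U=(1,1)$, $D=(1,-1)$, ending on the $x$-axis and never going below it; its semilength is half its number of steps and its height is the maximal $y$-coordinate reached. For $m\ge1$, $0\le a,b\le m-1$ with $a+b\le m-1$, and $u\ge0$, $\mathcal D_m(a,b;u)$ is the set of Dyck paths of height at most $m-1$ and semilength $m-1-b+u$ whose first $a$ steps are up-steps and whose last $m-1-b$ steps are down-steps; $D_m(a,b;u):=\#\mathcal D_m(a,b;u)$. *)

From mathcomp Require Import all_boot all_order all_algebra.
Set Implicit Arguments. Unset Strict Implicit. Unset Printing Implicit Defensive.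
Import GRing.Theory.
Local Open Scope ring_scope.

Fixpoint pr (n : nat) : {poly int} :=
  match n with
  | 0 => 1
  | n1.+1 => match n1 with
             | 0 => 1
             | n2.+1 => pr n1 - 'X * pr n2
             end
  end.

Definition pxi (xi : seq nat) : {poly int} := \prod_(x <- xi) pr x.

(* r-th coefficient of the formal power series expansion of P/Q, for Q with
   constant coefficient 1: 1/Q = sum_j (1-Q)^j, and (1-Q)^j = O(x^j), so
   only j <= r contributes to the coefficient of x^r. *)
Definition series_coef (P Q : {poly int}) (r : nat) : int :=
  (P * \sum_(j < r.+1) (1 - Q) ^+ j)`_r.

Definition Fcoef (m : nat) (xi : seq nat) (mu : nat) (r : nat) : int :=
  series_coef (pr (m - mu %% m - 1) * pxi xi) (pr m ^+ (mu %/ m).+1) r.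

Local Open Scope nat_scope.

Definition partition_le (m : nat) (xi : seq nat) : bool :=
  [&& all (fun x => 0 < x) xi, all (fun x => x <= m) xi & sorted geq xi].


(* Lattice paths as step sequences: true = U = (1,1), false = D = (1,-1). *)
Fixpoint walk_ok (h : nat) (s : seq bool) : bool :=
  match s with
  | [::] => h == 0
  | true :: s' => walk_ok h.+1 s'
  | false :: s' => (0 < h) && walk_ok h.-1 s'
  end.

Fixpoint walk_max (h : nat) (s : seq bool) : nat :=
  match s with
  | [::] => h
  | b :: s' => maxn h (walk_max (if b then h.+1 else h.-1) s')
  end.

Definition is_dyck (s : seq bool) : bool := walk_ok 0 s.
Definition height (s : seq bool) : nat := walk_max 0 s.

(* membership in D_m(a,b;u), for a path s of size 2*(m-1-b+u) *)
Definition in_Dm (m a b : nat) (s : seq bool) : bool :=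
  [&& is_dyck s, height s <= m - 1,
      take a s == nseq a true &
      drop (size s - (m - 1 - b)) s == nseq (m - 1 - b) false].

Definition Dm (m a b u : nat) : nat :=
  #|[pred t : ((m - 1 - b + u).*2).-tuple bool | in_Dm m a b t]|.

Definition tuple_count (m : nat) (ab : seq (nat * nat)) (r : nat) : nat :=
  \sum_(u : {ffun 'I_(size ab) -> 'I_r.+1} | \sum_(i < size ab) (u i : nat) == r)
    \prod_(i < size ab) Dm m (nth (0, 0) ab i).1 (nth (0, 0) ab i).2 (u i).

(* The generating function of walks from h to c in the strip [0, H], with x
   marking down-steps, is x^(h-c) p_(min h c) p_(H - max h c) / p_(H+1): both
   sides satisfy the first-step recurrence, the right-hand side thanks to the
   addition formula p_(c+e) = p_c p_e - x p_(c-1) p_(e-1).  A path of D_m(a,b;u)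
   is such a walk from a to m-1-b in [0, m-1], once its forced first a up-steps
   and last m-1-b down-steps are removed, so sum_u D_m(a,b;u) x^u = p_a p_b / p_m.
   Cancelling the parts equal to m, F_(xi,m,mu) is therefore the product of these
   series over the pairs (a_nu, b_nu); the families are the cases where
   p_(m-mu0-1) p_xi factors visibly as such a product. *)

From mathcomp Require Import all_boot all_order all_algebra.
From mathcomp Require Import ring zify.
Set Implicit Arguments. Unset Strict Implicit. Unset Printing Implicit Defensive.
Import GRing.Theory.
Local Open Scope ring_scope.

Definition pr_prev (n : nat) : {poly int} := if n is n'.+1 then pr n' else 0.

Lemma pr_prevS n : pr_prev n.+1 = pr n. Proof. by []. Qed.

Lemma prS n : pr n.+1 = pr n - 'X * pr_prev n.
Proof. by case: n => [|n] //=; rewrite mulr0 subr0. Qed.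

Lemma pr_coef0 n : (pr n)`_0 = 1.
Proof.
elim/ltn_ind: n => -[|[|n]] IH; try by rewrite coefC.
by rewrite prS coefB coefXM subr0 IH.
Qed.

Lemma prD c e : pr (c + e) = pr c * pr e - 'X * (pr_prev c * pr_prev e).
Proof.
elim/ltn_ind: c e => -[|[|c]] IH e.
- by rewrite add0n /= mul1r mul0r mulr0 subr0.
- by rewrite add1n prS /= !mul1r.
- by rewrite !addSn prS pr_prevS -addSn !IH // !prS !pr_prevS prS; ring.
Qed.

Lemma mul_pr c e :
  pr c * pr e = pr (c + e).+1 + 'X * (pr c * pr_prev e) + 'X * (pr_prev c * pr e).
Proof. rewrite -addSn prD prS pr_prevS; ring. Qed.

(* Numerator of the generating function of walks in [0, H] from h to c; the
   denominator is pr H.+1 (see pr_walk_gf). *)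
Definition strip_num (H c h : nat) : {poly int} :=
  'X^(h - c) * (pr (minn h c) * pr (H - maxn h c)).

Lemma strip_num_le H c h : (h <= c)%N -> strip_num H c h = pr h * pr (H - c).
Proof.
by move=> hc; rewrite /strip_num (eqP hc) mul1r (minn_idPl hc) (maxn_idPr hc).
Qed.

Lemma strip_num_ge H c h :
  (c <= h)%N -> strip_num H c h = 'X^(h - c) * (pr c * pr (H - h)).
Proof. by move=> ch; rewrite /strip_num (minn_idPr ch) (maxn_idPl ch). Qed.

Lemma strip_num_rec H c h : (c <= H)%N -> (h <= H)%N ->
  strip_num H c h = (if h == c then pr H.+1 else 0)
    + (if (h < H)%N then strip_num H c h.+1 else 0)
    + (if (0 < h)%N then 'X * strip_num H c h.-1 else 0).
Proof.
move=> cH hH; case: (ltngtP h c) => [hc|ch|<-].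
- rewrite (strip_num_le H (ltnW hc)) (strip_num_le H hc) (leq_trans hc cH).
  case: h hc {hH} => [|h] hc; first by rewrite /=; ring.
  rewrite ltn0Sn -pred_Sn (prS h.+1) pr_prevS (strip_num_le H (ltnW (ltnW hc))); ring.
- case: h hH ch => // h hH ch.
  have ch2 : (c <= h.+2)%N by rewrite ltnW // ltnW.
  rewrite ltn0Sn -pred_Sn !strip_num_ge ?(ltnW ch) // !subSn // ?(ltnW ch) //.
  move: (h - c)%N => k; rewrite !exprS.
  have [n ->] : exists n, H = (h.+1 + n)%N by exists (H - h.+1)%N; lia.
  rewrite addKn (_ : h.+1 + n - h = n.+1)%N; last by lia.
  case: n => [|n]; first by rewrite addn0 ltnn /=; ring.
  have -> : (h.+1 < h.+1 + n.+1)%N by lia.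
  have -> : (h.+1 + n.+1 - h.+2 = n)%N by lia.
  rewrite (prS n.+1) pr_prevS; ring.
- rewrite strip_num_ge // subnn expr0 mul1r mul_pr subnKC //.
  congr (_ + _ + _).
  + case: ltnP => [hH'|Hh]; last by rewrite (_ : H - h = 0)%N ?mulr0; exact/eqP.
    by rewrite strip_num_ge // subSnn expr1 -(subnSK hH').
  + case: h {hH} => [|h]; first by rewrite mul0r mulr0.
    by rewrite strip_num_le.
Qed.

Local Close Scope ring_scope.

Section TupleCount.
Variable T : finType.

Lemma mem_tuple_pred_vals n (P : pred (seq T)) s :
  (s \in [seq val t | t <- enum [pred t : n.-tuple T | P t]]) = (size s == n) && P s.
Proof.
apply/mapP/andP => [[t] | [sz Ps]]; first by rewrite mem_enum => Pt ->; rewrite size_tuple.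
by exists (Tuple sz); rewrite ?mem_enum.
Qed.

Lemma card_tuple_predE n (P : pred (seq T)) L : uniq L ->
  (forall s, (s \in L) = (size s == n) && P s) ->
  #|[pred t : n.-tuple T | P t]| = size L.
Proof.
move=> uL memL; rewrite cardE -(size_map val); apply/perm_size/uniq_perm => //.
  by rewrite map_inj_uniq ?enum_uniq //; exact: val_inj.
by move=> s; rewrite mem_tuple_pred_vals memL.
Qed.

Lemma card_tuple_pred_bij n n' (P Q : pred (seq T)) (f g : seq T -> seq T) :
  (forall s, size s = n -> P s -> [/\ size (f s) = n', Q (f s) & g (f s) = s]) ->
  (forall s, size s = n' -> Q s -> [/\ size (g s) = n, P (g s) & f (g s) = s]) ->
  #|[pred t : n.-tuple T | P t]| = #|[pred t : n'.-tuple T | Q t]|.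
Proof.
move=> fK gK; set L := [seq val t | t <- enum [pred t : n.-tuple T | P t]].
have memL := @mem_tuple_pred_vals n P.
rewrite cardE -(size_map val) -/L (@card_tuple_predE _ _ (map f L)) ?size_map //.
  rewrite map_inj_in_uniq ?map_inj_uniq ?enum_uniq //; first exact: val_inj.
  move=> x y; rewrite !memL => /andP [/eqP sx Px] /andP [/eqP sy Py] fxy.
  by have [_ _ <-] := fK x sx Px; have [_ _ <-] := fK y sy Py; rewrite fxy.
move=> s; apply/mapP/andP => [[x] | [/eqP ss Qs]].
  by rewrite memL => /andP [/eqP sx Px] ->; have [-> -> _] := fK x sx Px.
by have [sg Pg fg] := gK s ss Qs; exists (g s); rewrite // memL sg eqxx.
Qed.

End TupleCount.

Lemma card_bool_tupleS n (P : pred (seq bool)) :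
  #|[pred t : n.+1.-tuple bool | P t]| =
  (#|[pred t : n.-tuple bool | P (true :: t)]| +
   #|[pred t : n.-tuple bool | P (false :: t)]|)%N.
Proof.
set L := fun b => [seq val t | t <- enum [pred t : n.-tuple bool | P (b :: t)]].
have memL b s : (s \in L b) = (size s == n) && P (b :: s).
  exact: (mem_tuple_pred_vals n (fun s => P (b :: s))).
have mem_cons c b s (K : seq (seq bool)) : (b :: s \in map (cons c) K) = (b == c) && (s \in K).
  by apply/idP/andP => [/mapP [t tK [-> ->]] | [/eqP -> /(map_f (cons c))]].
rewrite (@card_tuple_predE _ _ _ (map (cons true) (L true) ++ map (cons false) (L false))).
- by rewrite size_cat !size_map !cardE.
- rewrite cat_uniq !map_inj_uniq ?enum_uniq ?andbT /=; try exact: val_inj; last 2 first.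
  + by move=> x y [].
  + by move=> x y [].
  + by apply/hasPn => _ /mapP [s _ ->]; rewrite mem_cons.
- case=> [|b s]; first by rewrite mem_cat; apply/negP => /orP [] /mapP [].
  by rewrite mem_cat !mem_cons !memL eqSS; case: b; rewrite ?orbF.
Qed.

Fixpoint strip_walk (H c h : nat) (s : seq bool) : bool :=
  match s with
  | [::] => h == c
  | true :: s' => (h < H) && strip_walk H c h.+1 s'
  | false :: s' => (0 < h) && strip_walk H c h.-1 s'
  end.

Lemma walk_max_ge h s : h <= walk_max h s.
Proof. by case: s => [|b s] //=; rewrite leq_maxl. Qed.

Lemma strip_walk_dyck H h s : h <= H ->
  walk_ok h s && (walk_max h s <= H) = strip_walk H 0 h s.
Proof.
elim: s h => [|[] s IH] h hH /=; first by rewrite hH andbT.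
- case: ltnP => hH' /=; first by rewrite geq_max hH IH.
  by rewrite geq_max [walk_max _ _ <= H]leqNgt (leq_ltn_trans hH' (walk_max_ge _ _)) !andbF.
- by case: h hH => [|h] hH //=; rewrite geq_max hH IH // ltnW.
Qed.

Lemma strip_walk_ups H c h k s : h + k <= H ->
  strip_walk H c h (nseq k true ++ s) = strip_walk H c (h + k) s.
Proof.
elim: k h => [|k IH] h hk /=; first by rewrite addn0.
by rewrite IH addSnnS // (leq_trans _ hk) // -addSnnS leq_addr.
Qed.

Lemma strip_walk_cat_downs H h k s :
  strip_walk H 0 h (s ++ nseq k false) = strip_walk H k h s.
Proof.
elim: s h => [|[] s IH] h /=; rewrite ?IH //.
by elim: k h => [|k IH'] [|h] //=; rewrite IH'.
Qed.

Lemma strip_walk_end_le H c h s : strip_walk H c h s -> c <= h + size s.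
Proof.
elim: s h => [|[] s IH] h /=; first by move/eqP ->; rewrite addn0.
all: by case/andP => _ /IH; lia.
Qed.

Definition nwalks H c h n := #|[pred t : n.-tuple bool | strip_walk H c h t]|.

Lemma nwalks0 H c h : nwalks H c h 0 = (h == c).
Proof.
rewrite /nwalks (@card_tuple_predE _ _ _ (if h == c then [:: [::]] else [::])).
- by case: (h == c).
- by case: (h == c).
- by move=> [|b s] /=; case: (h == c).
Qed.

Lemma nwalksS H c h n : nwalks H c h n.+1 =
  (if h < H then nwalks H c h.+1 n else 0) + (if 0 < h then nwalks H c h.-1 n else 0).
Proof.
rewrite /nwalks card_bool_tupleS /=.
by congr (_ + _); (case: ifP => _; [apply: eq_card | apply: eq_card0]).
Qed.

Lemma nwalks_short H c h n : h + n < c -> nwalks H c h n = 0.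
Proof.
move=> short; apply: eq_card0 => t; apply/negbTE/negP => /strip_walk_end_le.
by rewrite size_tuple leqNgt short.
Qed.

(* d is the number of down-steps; if c + 2d < h no such walk exists, and the
   truncated length 0 indeed gives the count (h == c) = 0. *)
Definition nwalks_down H c h d := nwalks H c h (c + d.*2 - h).

Lemma nwalks_down_rec H c h d : nwalks_down H c h d =
  ((h == c) && (d == 0)) + (if h < H then nwalks_down H c h.+1 d else 0)
  + (if (0 < h) && (0 < d) then nwalks_down H c h.-1 d.-1 else 0).
Proof.
rewrite /nwalks_down -!mul2n; case: (posnP (c + 2 * d - h)) => [E|].
- rewrite E nwalks0 (_ : c + 2 * d - h.+1 = 0) ?nwalks0; last by lia.
  by do 2 case: ifP => ?; try rewrite (_ : c + 2 * d.-1 - h.-1 = 0) ?nwalks0; lia.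
- case E: (c + 2 * d - h) => [//|n] _.
  have -> : (h == c) && (d == 0) = false by lia.
  rewrite nwalksS (_ : c + 2 * d - h.+1 = n) ?add0n; last by lia.
  congr (_ + _); case: (posnP h) => [->|h0] //; case: (posnP d) => [d0|d0] /=.
  + by rewrite nwalks_short //; lia.
  + by congr nwalks; lia.
Qed.

Lemma Dm_nwalks_down m a b u : 1 <= m -> a + b <= m - 1 ->
  Dm m a b u = nwalks_down (m - 1) (m - 1 - b) a u.
Proof.
move=> m1 ab; rewrite /Dm /nwalks_down /nwalks.
set H := m - 1; set c := H - b.
have ac : a <= c by rewrite /c /H; lia.
have cH : c <= H by rewrite /c leq_subr.
have walkE w : strip_walk H 0 0 (nseq a true ++ w ++ nseq c false) = strip_walk H c a w.
  by rewrite strip_walk_ups ?add0n ?strip_walk_cat_downs // (leq_trans ac).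
apply: (@card_tuple_pred_bij _ _ _ _ _ (fun s => take (size s - a - c) (drop a s))
          (fun w => nseq a true ++ w ++ nseq c false)).
- move=> s ss /and4P [dy ht /eqP tk /eqP dr].
  have dec : s = nseq a true ++ take (size s - a - c) (drop a s) ++ nseq c false.
    rewrite -tk -dr -[in LHS](cat_take_drop a s); congr (_ ++ _).
    rewrite -[in LHS](cat_take_drop (size s - a - c) (drop a s)); congr (_ ++ _).
    by rewrite drop_drop; congr drop; rewrite ss -!mul2n; lia.
  split; last by rewrite -dec.
  + by rewrite size_takel ss -!mul2n ?size_drop ?ss -?mul2n; lia.
  + by rewrite -walkE -dec -strip_walk_dyck //; apply/andP.
- move=> w sw wkw.
  have sg : size (nseq a true ++ w ++ nseq c false) = (c + u).*2.
    by rewrite !size_cat !size_nseq sw -!mul2n; lia.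
  have := strip_walk_dyck (nseq a true ++ w ++ nseq c false) (leq0n H).
  rewrite walkE wkw => /andP [dy ht].
  split => //.
  + apply/and4P; split => //; first by rewrite take_size_cat ?size_nseq.
    by rewrite catA drop_size_cat // !size_cat !size_nseq sw -!mul2n /c /H; lia.
  + by rewrite drop_size_cat ?size_nseq // take_size_cat // sg sw -!mul2n; lia.
Qed.

Local Open Scope ring_scope.

Section AgreeBelow.
Variable R : nzRingType.

Definition agree_below (n : nat) (p q : {poly R}) := forall i, (i < n)%N -> p`_i = q`_i.

Lemma agree_belowM n p p' q q' :
  agree_below n p p' -> agree_below n q q' -> agree_below n (p * q) (p' * q').
Proof.
move=> pp' qq' i ilt; rewrite !coefM; apply: eq_bigr => j _.
by rewrite pp' ?qq' ?(leq_ltn_trans _ ilt) // ?leq_subr // -ltnS.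
Qed.

End AgreeBelow.

Definition walk_gf H c h n : {poly int} := \poly_(d < n) (nwalks_down H c h d)%:Z.

Lemma walk_gf_rec H c h n : agree_below n (walk_gf H c h n)
  ((h == c)%:R + (if (h < H)%N then walk_gf H c h.+1 n else 0)
   + (if (0 < h)%N then 'X * walk_gf H c h.-1 n else 0)).
Proof.
move=> i ilt; rewrite !coefD coef_poly ilt nwalks_down_rec !PoszD coefMn coef1.
congr (_ + _ + _).
- by case: (h == c); case: (i == 0%N).
- by case: ifP => _; rewrite ?coef0 // coef_poly ilt.
- case: (posnP h) => [->|h0]; first by rewrite coef0.
  rewrite coefXM; case: (posnP i) => [->|i0] //=.
  by rewrite coef_poly (leq_ltn_trans (leq_pred i) ilt).
Qed.

Lemma pr_walk_gf H c h n : (c <= H)%N -> (h <= H)%N ->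
  agree_below n (pr H.+1 * walk_gf H c h n) (strip_num H c h).
Proof.
move=> cH hH i; elim/ltn_ind: i h hH => i IHi h hH ilt.
move: {2}(H - h)%N (erefl (H - h)%N) => j; elim/ltn_ind: j h hH => j IHj h hH Hh.
rewrite (agree_belowM (fun _ _ => erefl) (@walk_gf_rec H c h n)) //.
rewrite strip_num_rec // !mulrDr !coefD; congr (_ + _ + _).
- by case: (h == c); rewrite ?mulr1 ?mulr0.
- case: ltnP => hH'; rewrite ?mulr0 // (IHj (H - h.+1)%N) //; lia.
- case: (posnP h) => [_|h0]; first by rewrite mulr0.
  rewrite mulrCA !coefXM; case: (posnP i) => [//|i0].
  by rewrite IHi ?prednK ?ltn_predL // ?(leq_trans (leq_pred h)) // ltnW.
Qed.

Definition Dm_gf m a b n : {poly int} := \poly_(u < n) (Dm m a b u)%:Z.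

Lemma pr_Dm_gf m a b n : (1 <= m)%N -> (a + b <= m - 1)%N ->
  agree_below n (pr m * Dm_gf m a b n) (pr a * pr b).
Proof.
move=> m1 ab.
have -> : Dm_gf m a b n = walk_gf (m - 1) (m - 1 - b) a n.
  by apply/polyP => u; rewrite !coef_poly Dm_nwalks_down.
have ac : (a <= m - 1 - b)%N by lia.
have bm : (b <= m - 1)%N by lia.
have cH : (m - 1 - b <= m - 1)%N := leq_subr _ _.
have := @pr_walk_gf (m - 1) (m - 1 - b) a n cH (leq_trans ac cH).
by rewrite strip_num_le // subKn // subn1 prednK.
Qed.

Lemma prod_pr_Dm_gf m (ab : seq (nat * nat)) n : (1 <= m)%N ->
  all (fun p => p.1 + p.2 <= m - 1)%N ab ->
  agree_below n (pr m ^+ size ab * \prod_(p <- ab) Dm_gf m p.1 p.2 n)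
                (\prod_(p <- ab) (pr p.1 * pr p.2)).
Proof.
move=> m1; elim: ab => [_ i _|p ab IH /andP [hp hab]]; first by rewrite !big_nil mulr1.
rewrite !big_cons exprS mulrACA; exact: agree_belowM (pr_Dm_gf m1 hp) (IH hab).
Qed.

Lemma series_coefE (P Q G : {poly int}) r :
  Q`_0 = 1 -> agree_below r.+1 (Q * G) P -> series_coef P Q r = G`_r.
Proof.
move=> Q0 QG; rewrite /series_coef; set S := \sum_(j < r.+1) (1 - Q) ^+ j.
have X_dvd : 1 - Q = drop_poly 1 (1 - Q) * 'X.
  rewrite -['X]expr1 -{1}[1 - Q](poly_take_drop 1) -[RHS]add0r; congr (_ + _).
  by apply/polyP => -[|i]; rewrite coef_take_poly coef0 ?coefB ?Q0 ?coef1 ?subrr.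
have QS : Q * S = 1 - 'X^(r.+1) * drop_poly 1 (1 - Q) ^+ r.+1.
  have geom := subrX1 (1 - Q) r.+1; rewrite -/S in geom.
  rewrite -exprMn (mulrC 'X) -X_dvd; have -> : Q * S = - ((1 - Q - 1) * S) by ring.
  by rewrite -geom; ring.
rewrite -(agree_belowM QG (fun _ _ => erefl)) // -mulrA (mulrC G) mulrA QS.
by rewrite mulrBl mul1r -mulrA coefB coefXnM ltnSn subr0.
Qed.

Lemma prod_scale_Xn (R : comNzRingType) (I : finType) (c : I -> R) (k : I -> nat) :
  \prod_i (c i *: 'X^(k i)) = (\prod_i c i) *: 'X^(\sum_i k i).
Proof.
under eq_bigr => i _ do rewrite -mul_polyC.
by rewrite big_split /= prodrXr -rmorph_prod mul_polyC.
Qed.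

Lemma coef_prod_Dm_gf m (ab : seq (nat * nat)) r :
  (\prod_(p <- ab) Dm_gf m p.1 p.2 r.+1)`_r = (tuple_count m ab r)%:Z.
Proof.
rewrite (big_nth (0%N, 0%N)) big_mkord.
under eq_bigr => i _ do rewrite /Dm_gf poly_def.
rewrite bigA_distr_bigA /=.
under eq_bigr => f _ do rewrite prod_scale_Xn.
rewrite coef_sumMXn /tuple_count -natz natr_sum.
by apply: eq_bigr => f _; rewrite natr_prod; apply: eq_bigr => i _; rewrite natz.
Qed.

Lemma tuple_count_single m a b r : tuple_count m [:: (a, b)] r = Dm m a b r.
Proof.
by apply/eqP; rewrite -eqz_nat -coef_prod_Dm_gf big_seq1 coef_poly ltnSn.
Qed.

Lemma prodr_nseq (R : nzRingType) (T : Type) (F : T -> R) n a :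
  \prod_(x <- nseq n a) F x = F a ^+ n.
Proof. by rewrite big_nseq -Monoid.iteropE. Qed.

Lemma pxi_split m xi : all (fun x => x <= m)%N xi ->
  pxi xi = (\prod_(x <- xi | (x < m)%N) pr x) * pr m ^+ count_mem m xi.
Proof.
rewrite /pxi; elim: xi => [|x xi IH /andP [xm /IH {}IH]]; first by rewrite !big_nil mulr1.
rewrite !big_cons IH /=; case: (ltngtP x m) xm => // [_ _|-> _].
- by rewrite add0n mulrA.
- by rewrite add1n exprS mulrCA.
Qed.

Lemma Fcoef_tuple_count m xi mu ab j r : (1 <= m)%N ->
  all (fun p => p.1 + p.2 <= m - 1)%N ab -> (mu %/ m).+1 = (size ab + j)%N ->
  pr (m - mu %% m - 1) * pxi xi = (\prod_(p <- ab) (pr p.1 * pr p.2)) * pr m ^+ j ->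
  Fcoef m xi mu r = (tuple_count m ab r)%:Z.
Proof.
move=> m1 hab hsize hP; rewrite /Fcoef hsize hP -coef_prod_Dm_gf.
apply: series_coefE.
  by elim: (_ + _)%N => [|n IH]; rewrite ?coef1 // exprS coef0M IH pr_coef0 mulr1.
rewrite exprD mulrAC; exact: agree_belowM (prod_pr_Dm_gf m1 hab) (fun _ _ => erefl).
Qed.

Lemma Fcoef_nseq_cat m t ys q rho (ab : seq (nat * nat)) N :
  (rho < m)%N -> sumn ys = (q * m + rho)%N ->
  all (fun p => p.1 + p.2 <= m - 1)%N ab -> size ab = q.+1 ->
  pr (m - rho - 1) * pxi ys = \prod_(p <- ab) (pr p.1 * pr p.2) ->
  Fcoef m (nseq t m ++ ys) (sumn (nseq t m ++ ys)) N = (tuple_count m ab N)%:Z.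
Proof.
move=> rm hys hab sab hP; have m1 : (0 < m)%N := leq_ltn_trans (leq0n rho) rm.
have -> : sumn (nseq t m ++ ys) = ((t + q) * m + rho)%N.
  by rewrite sumn_cat sumn_nseq hys mulnDl addnA mulnC.
apply: (@Fcoef_tuple_count _ _ _ _ t) => //.
  by rewrite divnMDl // divn_small // addn0 sab addSn addnC.
by rewrite modnMDl modn_small // /pxi big_cat prodr_nseq mulrCA -/(pxi ys) hP mulrC.
Qed.

Lemma Fcoef_small_parts m t s q rho (rs : seq nat) N :
  all (fun x => 1 <= x <= m - 1)%N rs -> (rho < m)%N ->
  (sumn rs + s = q * m + rho)%N -> (size rs <= q)%N ->
  Fcoef m (nseq t m ++ rs ++ nseq s 1%N) (sumn (nseq t m ++ rs ++ nseq s 1%N)) N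
  = (tuple_count m ((0%N, (m - rho - 1)%N) :: [seq (x, 0%N) | x <- rs]
                     ++ nseq (q - size rs) (0%N, 0%N)) N)%:Z.
Proof.
move=> hrs rm hsum hq; apply: (@Fcoef_nseq_cat _ _ _ q) rm _ _ _ _.
- by rewrite sumn_cat sumn_nseq mul1n.
- rewrite /= all_cat all_map all_nseq orbT !andbT leq_sub2r ?leq_subr //=.
  by apply: sub_all hrs => x /andP [_] /=; rewrite addn0.
- by rewrite /= size_cat size_map size_nseq subnKC.
- rewrite big_cons big_cat big_map prodr_nseq /pxi big_cat prodr_nseq /=.
  under [in RHS]eq_bigr => x _ do rewrite mulr1.
  by rewrite mulr1 !expr1n !mulr1 mul1r.
Qed.

Lemma Fcoef_one_part m t r s N : (1 <= r)%N -> (r + s < m)%N ->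
  Fcoef m (nseq t m ++ r :: nseq s 1%N) (sumn (nseq t m ++ r :: nseq s 1%N)) N
  = (Dm m r (m - r - s - 1) N)%:Z.
Proof.
move=> r1 rsm; rewrite -tuple_count_single; apply: (@Fcoef_nseq_cat _ _ _ 0%N (r + s)) => //.
- by rewrite /= sumn_nseq mul1n.
- by rewrite /= andbT; lia.
- by rewrite big_seq1 /pxi big_cons prodr_nseq expr1n mulr1 mulrC subnDA.
Qed.

Theorem theorem1p3 :
  (forall (m : nat) (xi : seq nat) (mu : nat) (ab : seq (nat * nat)),
     (1 <= m)%N ->
     partition_le m xi ->
     (* t = #{i : xi_i = m},  k = mu1 + 1 - t >= 0 *)
     (count_mem m xi <= (mu %/ m).+1)%N ->
     size ab = ((mu %/ m).+1 - count_mem m xi)%N ->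
     all (fun p => (p.1 + p.2 <= m - 1)%N) ab ->
     pr (m - mu %% m - 1) * \prod_(x <- xi | (x < m)%N) pr x
       = \prod_(p <- ab) (pr p.1 * pr p.2) ->
     forall r : nat, Fcoef m xi mu r = (tuple_count m ab r)%:Z)
  /\
  (* (a) xi = (m^t, 1^s), mu = |xi| *)
  (forall (m t s q rho : nat),
     (1 <= m)%N -> (rho < m)%N -> s = (q * m + rho)%N ->
     let xi := nseq t m ++ nseq s 1%N in
     forall N : nat,
       Fcoef m xi (sumn xi) N
       = (tuple_count m ((0%N, (m - rho - 1)%N) :: nseq q (0%N, 0%N)) N)%:Z)
  /\
  (* (b) xi = (m^t, r, 1^s), 1 <= r <= m-1, mu = |xi| *)
  (forall (m t r s q rho : nat),
     (1 <= r)%N -> (r <= m - 1)%N -> (rho < m)%N -> (r + s = q * m + rho)%N ->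
     let xi := nseq t m ++ r :: nseq s 1%N in
     (q = 0%N -> forall u : nat,
        Fcoef m xi (sumn xi) u = (Dm m r (m - r - s - 1) u)%:Z) /\
     ((1 <= q)%N -> forall N : nat,
        Fcoef m xi (sumn xi) N
        = (tuple_count m ((0%N, (m - rho - 1)%N) :: (r, 0%N)
                            :: nseq (q - 1) (0%N, 0%N)) N)%:Z))
  /\
  (* (c) xi = (m^t, r_1, ..., r_d, 1^s), 1 <= r_i <= m-1, mu = |xi| *)
  (forall (m t s q rho : nat) (rs : seq nat),
     all (fun x => (1 <= x <= m - 1)%N) rs -> sorted geq rs ->
     (rho < m)%N -> (sumn rs + s = q * m + rho)%N ->
     let xi := nseq t m ++ rs ++ nseq s 1%N in
     (size rs <= q)%N -> forall N : nat,
       Fcoef m xi (sumn xi) N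
       = (tuple_count m ((0%N, (m - rho - 1)%N)
                          :: [seq (x, 0%N) | x <- rs]
                          ++ nseq (q - size rs) (0%N, 0%N)) N)%:Z).
Proof.
split; [|split; [|split]].
- move=> m xi mu ab m1 /and3P [_ xi_le_m _] t_le sab hab hP r.
  apply: (@Fcoef_tuple_count _ _ _ _ (count_mem m xi)) => //; first by rewrite sab subnK.
  by rewrite (pxi_split xi_le_m) mulrA hP.
- move=> m t s q rho _ rm -> xi N; rewrite /xi.
  have := @Fcoef_small_parts m t (q * m + rho) q rho [::] N isT rm (add0n _) isT.
  by rewrite subn0.
- move=> m t r s q rho r1 rm rhom hsum xi; split => [q0 u | q1 N]; rewrite /xi.
  + by apply: Fcoef_one_part => //; rewrite hsum q0 mul0n add0n.
  + apply: (@Fcoef_small_parts m t s q rho [:: r]) => //=; first by rewrite r1 rm.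
    by rewrite addn0.
- by move=> m t s q rho rs hrs _ rm hsum xi hq N; rewrite /xi; apply: Fcoef_small_parts.
Qed.
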